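(* Let $k$ be a commutative associative unital ring, $R$ a commutative associative unital $k$-algebra and $B$ an $R$-algebra. Assume $\beta\in\mathrm{IBF}_{(R,k)}(B)$ is nonsingular. Then $\mathrm{Cent}_R(B)\cong\mathrm{IBF}_{(R,k)}(B)$ as $R$-modules. If furthermore $B$ is a central $R$-algebra, then $\mathrm{IBF}_{(R,k)}(B)$ is a free $R$-module of rank $1$ with basis $\beta$: $\mathrm{IBF}_{(R,k)}(B)=R\beta\cong R$.
   Context: An $R$-algebra is an $R$-module with an $R$-bilinear product (no identities assumed). A $k$-bilinear map $\beta\colon B\times B\to k$ is $(R,k)$-bilinear if $\beta(rb_1,b_2)=\beta(b_1,rb_2)$ for $r\in R$; it is invariant if $\beta(ab,c)=\beta(a,bc)=\beta(b,ca)$. $\mathrm{IBF}_{(R,k)}(B)$ is the $R$-module of invariant $(R,k)$-bilinear maps $B\times B\to k$, with $(r\beta)(b_1,b_2)=\beta(rb_1,b_2)$. $\beta$ is nonsingular if the $R$-linear map $B\to B^*=\mathrm{Hom}_k(B,k)$, $b\mapsto\beta(b,-)$, is bijective (where $(r\varphi)(b)=\varphi(rb)$). $\mathrm{Cent}_R(B)=\{\chi\in\mathrm{End}_R(B):\chi(ab)=a\chi(b)=\chi(a)b\}$; $B$ is central if $R\to\mathrm{Cent}_R(B)$, $r\mapsto(b\mapsto rb)$, is an isomorphism. *)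

From HB Require Import structures.
From mathcomp Require Import all_boot all_algebra.
Set Implicit Arguments. Unset Strict Implicit. Unset Printing Implicit Defensive.
Import GRing.Theory.
Local Open Scope ring_scope.

(* Setting: k, R commutative unital rings (possibly zero), the k-algebra
   structure of R given by a unital ring morphism phi : k -> R, B an R-module
   with a product mul : B -> B -> B (no associativity/identity assumed).
   B is a k-module by restriction of scalars: c . b := phi c *: b. *)

Section Defs.
Variables (k R : comPzRingType) (phi : {rmorphism k -> R}) (B : lmodType R).

Definition kscale (c : k) (b : B) : B := phi c *: b.

Definition Rbilinear_prod (mul : B -> B -> B) : Prop :=
  [/\ forall a b c, mul (a + b) c = mul a c + mul b c,
      forall a b c, mul a (b + c) = mul a b + mul a c,
      forall (r : R) a b, mul (r *: a) b = r *: mul a b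
    & forall (r : R) a b, mul a (r *: b) = r *: mul a b].

Definition kbilinear (beta : B -> B -> k) : Prop :=
  [/\ forall a b c, beta (a + b) c = beta a c + beta b c,
      forall a b c, beta a (b + c) = beta a b + beta a c,
      forall (x : k) a b, beta (kscale x a) b = x * beta a b
    & forall (x : k) a b, beta a (kscale x b) = x * beta a b].

Definition RKbilinear (beta : B -> B -> k) : Prop :=
  kbilinear beta /\ forall (r : R) a b, beta (r *: a) b = beta a (r *: b).

Definition invariant (mul : B -> B -> B) (beta : B -> B -> k) : Prop :=
  forall a b c, beta (mul a b) c = beta a (mul b c) /\
                beta a (mul b c) = beta b (mul c a).

Definition IBF (mul : B -> B -> B) (beta : B -> B -> k) : Prop :=
  RKbilinear beta /\ invariant mul beta.

Definition ibf_scale (r : R) (beta : B -> B -> k) : B -> B -> k :=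
  fun b1 b2 => beta (r *: b1) b2.
Definition ibf_add (beta gamma : B -> B -> k) : B -> B -> k :=
  fun b1 b2 => beta b1 b2 + gamma b1 b2.

Definition klinear_form (f : B -> k) : Prop :=
  (forall a b, f (a + b) = f a + f b) /\ (forall (x : k) a, f (kscale x a) = x * f a).

Definition nonsingular (beta : B -> B -> k) : Prop :=
  (forall b b', beta b = beta b' -> b = b') /\
  (forall f : B -> k, klinear_form f -> exists b, beta b = f).

Definition Rlinear_end (chi : B -> B) : Prop :=
  (forall a b, chi (a + b) = chi a + chi b) /\ (forall (r : R) a, chi (r *: a) = r *: chi a).
Definition Cent (mul : B -> B -> B) (chi : B -> B) : Prop :=
  Rlinear_end chi /\ forall a b, chi (mul a b) = mul a (chi b) /\ mul a (chi b) = mul (chi a) b.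

Definition cent_scale (r : R) (chi : B -> B) : B -> B := fun b => r *: chi b.
Definition cent_add (chi psi : B -> B) : B -> B := fun b => chi b + psi b.

Definition central (mul : B -> B -> B) : Prop :=
  (forall r r' : R, (fun b : B => r *: b) = (fun b => r' *: b) -> r = r') /\
  (forall chi, Cent mul chi -> exists r : R, chi = (fun b => r *: b)).

(* an R-module isomorphism between the submodules Cent_R(B) of (B -> B)
   and IBF_(R,k)(B) of (B -> B -> k) *)
Definition Rmod_iso_Cent_IBF (mul : B -> B -> B)
    (F : (B -> B) -> (B -> B -> k)) : Prop :=
  [/\ forall chi, Cent mul chi -> IBF mul (F chi),
      forall chi psi, Cent mul chi -> Cent mul psi ->
        F (cent_add chi psi) = ibf_add (F chi) (F psi),
      forall r chi, Cent mul chi -> F (cent_scale r chi) = ibf_scale r (F chi),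
      forall chi psi, Cent mul chi -> Cent mul psi -> F chi = F psi -> chi = psi
    & forall gamma, IBF mul gamma -> exists2 chi, Cent mul chi & F chi = gamma].

End Defs.

(* Since beta is nonsingular, every gamma in IBF(B) is represented as
   gamma(b1, b2) = beta(chi b1, b2) for a unique map chi : B -> B.  Bilinearity
   and invariance of gamma translate, through nonsingularity, into chi being
   R-linear and commuting with multiplications, i.e. chi in Cent(B); conversely
   every chi in Cent(B) yields such a form.  When B is central, chi is a scalar
   r, so gamma = r beta, and r is unique because beta is nonsingular. *)

From Pilot Require Import Defs.
From HB Require Import structures.
From Stdlib Require Import FunctionalExtensionality ClassicalEpsilon.
From mathcomp Require Import all_boot all_algebra.
Import GRing.Theory.
Set Implicit Arguments. Unset Strict Implicit. Unset Printing Implicit Defensive.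
Local Open Scope ring_scope.

Section CentForm.
Variables (k R : comPzRingType) (phi : {rmorphism k -> R}) (B : lmodType R).
Variable mul : B -> B -> B.

Lemma invariantC {gamma : B -> B -> k} : Defs.invariant mul gamma ->
  forall x y z, gamma x (mul y z) = gamma z (mul x y).
Proof.
by move=> ginv x y z; rewrite (proj2 (ginv x y z)) (proj2 (ginv y z x)).
Qed.

Definition cent_form (beta : B -> B -> k) (chi : B -> B) : B -> B -> k :=
  fun b1 b2 => beta (chi b1) b2.

Variable beta : B -> B -> k.
Hypothesis beta_IBF : IBF phi mul beta.

Lemma cent_form_IBF (chi : B -> B) :
  Cent mul chi -> IBF phi mul (cent_form beta chi).
Proof.
have [[[bD1 bD2 bZ1 bZ2] bRK] binv] := beta_IBF.
move=> [[cD cZ] cC]; split; first split; first split.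
- by move=> a b c; rewrite /cent_form cD bD1.
- by move=> a b c; rewrite /cent_form bD2.
- by move=> x a b; rewrite /cent_form /kscale cZ -/(kscale phi x (chi a)) bZ1.
- by move=> x a b; rewrite /cent_form bZ2.
- by move=> r a b; rewrite /cent_form cZ bRK.
move=> a b c; rewrite /cent_form; split.
- by rewrite (proj1 (cC a b)) (proj2 (cC a b)) (proj1 (binv _ _ _)).
- by rewrite (proj2 (binv (chi b) c a)) (proj2 (cC a b)) (proj2 (binv c (chi a) b)).
Qed.

Lemma cent_form_add (chi psi : B -> B) :
  cent_form beta (cent_add chi psi) =
  ibf_add (cent_form beta chi) (cent_form beta psi).
Proof.
have [[[bD1 _ _ _] _] _] := beta_IBF.
apply: functional_extensionality => b1.
by apply: functional_extensionality => b2; rewrite /cent_form /cent_add bD1.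
Qed.

Lemma cent_form_scale (r : R) (chi : B -> B) : Rlinear_end chi ->
  cent_form beta (cent_scale r chi) = ibf_scale r (cent_form beta chi).
Proof.
move=> [_ cZ]; apply: functional_extensionality => b1.
by apply: functional_extensionality => b2; rewrite /cent_form /cent_scale /ibf_scale cZ.
Qed.

Hypothesis beta_nonsingular : nonsingular phi beta.

Lemma nonsingular_eq (u v : B) : (forall y, beta u y = beta v y) -> u = v.
Proof.
by move=> E; apply: (proj1 beta_nonsingular); apply: functional_extensionality.
Qed.

Lemma cent_form_inj : injective (cent_form beta).
Proof.
move=> chi psi E; apply: functional_extensionality => b; apply: nonsingular_eq => y.
exact: (f_equal (fun G => G b y) E).
Qed.

Lemma nonsingular_represent (gamma : B -> B -> k) :
  (forall b, klinear_form phi (gamma b)) ->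
  exists chi : B -> B, forall b, beta (chi b) = gamma b.
Proof.
move=> glin; have ex b : exists c, beta c = gamma b.
  exact: (proj2 beta_nonsingular) _ (glin b).
exists (fun b => proj1_sig (constructive_indefinite_description _ (ex b))).
by move=> b; case: constructive_indefinite_description.
Qed.

(* The three identities of [Cent] are each tested against an arbitrary y and
   reduced, by invariance of beta and of gamma, to the same value of gamma. *)
Lemma represent_Cent {gamma : B -> B -> k} {chi : B -> B} :
  IBF phi mul gamma -> (forall b, beta (chi b) = gamma b) -> Cent mul chi.
Proof.
have [[[bD1 _ _ _] bRK] binv] := beta_IBF.
move=> [[[gD1 _ _ _] gRK] ginv] chiE.
have bC := invariantC binv; have gC := invariantC ginv.
split; first split.
- by move=> a b; apply: nonsingular_eq => y; rewrite bD1 !chiE gD1.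
- by move=> r a; apply: nonsingular_eq => y; rewrite bRK !chiE gRK.
move=> a b; split; apply: nonsingular_eq => y.
- by rewrite chiE (proj1 (binv _ _ _)) -bC chiE (proj1 (ginv _ _ _)) -gC.
- by rewrite !(proj1 (binv _ _ _)) -bC !chiE -gC.
Qed.

Lemma cent_form_surj {gamma : B -> B -> k} : IBF phi mul gamma ->
  exists2 chi, Cent mul chi & cent_form beta chi = gamma.
Proof.
move=> gIBF; have [[[_ gD2 _ gZ2] _] _] := gIBF.
have [chi chiE] : exists chi : B -> B, forall b, beta (chi b) = gamma b.
  by apply: nonsingular_represent => b; split=> [a c | x a]; [exact: gD2 | exact: gZ2].
exists chi; first exact: represent_Cent gIBF chiE.
apply: functional_extensionality => b1.
by apply: functional_extensionality => b2; rewrite /cent_form chiE.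
Qed.

Lemma Cent_IBF_iso : Rmod_iso_Cent_IBF phi mul (cent_form beta).
Proof.
split.
- exact: cent_form_IBF.
- by move=> chi psi _ _; exact: cent_form_add.
- by move=> r chi [chi_linear _]; exact: cent_form_scale.
- by move=> chi psi _ _; exact: cent_form_inj.
- by move=> gamma; exact: cent_form_surj.
Qed.

Hypothesis B_central : central mul.

Lemma central_IBF_scale (gamma : B -> B -> k) :
  IBF phi mul gamma -> exists r : R, gamma = ibf_scale r beta.
Proof.
move=> gIBF; have [chi Cchi <-] := cent_form_surj gIBF.
by have [r ->] := proj2 B_central chi Cchi; exists r.
Qed.

Lemma central_ibf_scale_inj (r r' : R) :
  ibf_scale r beta = ibf_scale r' beta -> r = r'.
Proof.
move=> E; apply: (proj1 B_central).
exact: (@cent_form_inj (fun b => r *: b) (fun b => r' *: b) E).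
Qed.

End CentForm.

Theorem corollary3p8 (k R : comPzRingType) (phi : {rmorphism k -> R})
  (B : lmodType R) (mul : B -> B -> B) (beta : B -> B -> k) :
  Rbilinear_prod mul ->
  IBF phi mul beta ->
  nonsingular phi beta ->
  (exists F : (B -> B) -> (B -> B -> k), Rmod_iso_Cent_IBF phi mul F) /\
  (central mul ->
     (forall gamma, IBF phi mul gamma -> exists r : R, gamma = ibf_scale r beta) /\
     (forall r r' : R, ibf_scale r beta = ibf_scale r' beta -> r = r')).
Proof.
move=> _ beta_IBF beta_nonsingular; split.
  exists (cent_form beta); exact: Cent_IBF_iso beta_IBF beta_nonsingular.
move=> B_central; split.
- exact: central_IBF_scale beta_IBF beta_nonsingular B_central.
- exact: central_ibf_scale_inj beta_nonsingular B_central.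
Qed.
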